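(* Let $p>1$ be an integer and let $u^{(p)}$ be the fixed point of the substitution $\varphi_p(L)=L^pS$, $\varphi_p(S)=M$, $\varphi_p(M)=L^{p-1}S$. Then (i) each occurrence of $S$ in $u^{(p)}$ is preceded by $L$ and followed either by $L$ or by $M$; (ii) each occurrence of $M$ in $u^{(p)}$ is preceded by $S$ and followed by $L$.
   Context: $u^{(p)}=\lim_{n\to\infty}\varphi_p^n(L)$ is the unique infinite word over $\{L,S,M\}$ with $\varphi_p(u^{(p)})=u^{(p)}$. *)

From mathcomp Require Import all_boot.
Set Implicit Arguments. Unset Strict Implicit. Unset Printing Implicit Defensive.

Inductive letter := L | S | M.

Definition phi (p : nat) (a : letter) : seq letter :=
  match a with
  | L => rcons (nseq p L) S
  | S => [:: M]
  | M => rcons (nseq p.-1 L) S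
  end.

Definition phiw (p : nat) (w : seq letter) : seq letter := flatten (map (phi p) w).

Definition phin (p n : nat) : seq letter := iter n (phiw p) [:: L].

(* The fixed point u^(p) = lim_n phi_p^n(L), as a function nat -> letter
   (letters indexed from 0). Since phi_p(L) starts with L, each phi_p^n(L)
   is a prefix of phi_p^(n+1)(L), and |phi_p^n(L)| >= n+1 for p >= 1, so the
   i-th letter of the limit is the i-th letter of phi_p^(i+1)(L). *)
Definition u (p : nat) (i : nat) : letter := nth L (phin p i.+1) i.

From mathcomp Require Import all_boot zify.

(* All two-letter factors of u^(p) lie in {LL, LS, SL, SM, ML}.  This set is
   stable under phi_p: the images of the letters are paths for it, and at a
   junction the last letter of phi_p(x) (S, or M when x = S) is followed by the
   first letter of phi_p(y), which is L unless y = S, where it is M.  Hence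
   every phi_p^n(L) is a path, and the theorem reads off the neighbours of S
   and M from the admissible factors. *)

Definition admissible (a b : letter) : bool :=
  match a, b with
  | L, L | L, S | S, L | S, M | M, L => true
  | _, _ => false
  end.

Definition last_phi_letter (a : letter) : letter :=
  match a with L => S | S => M | M => S end.

Lemma path_admissible_block k : path admissible L (rcons (nseq k L) S).
Proof. by elim: k. Qed.

Section Substitution.

Variable p : nat.
Hypothesis p_gt1 : 1 < p.

Lemma last_phi x a : last x (phi p a) = last_phi_letter a.
Proof. by case: a => //=; rewrite last_rcons. Qed.

Lemma path_phi x y :
  admissible x y -> path admissible (last_phi_letter x) (phi p y).
Proof.
case: p p_gt1 => [|[|q]] // _.
by case: x; case: y => //= _; rewrite ?path_admissible_block.
Qed.

Lemma phiw_cons y w : phiw p (y :: w) = phi p y ++ phiw p w.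
Proof. by []. Qed.

Lemma phiw_cat w t : phiw p (w ++ t) = phiw p w ++ phiw p t.
Proof. by rewrite /phiw map_cat flatten_cat. Qed.

Lemma path_phiw x w :
  path admissible x w -> path admissible (last_phi_letter x) (phiw p w).
Proof.
elim: w x => [|y w IHw] x //= /andP[xy yw].
by rewrite phiw_cons cat_path path_phi //= last_phi IHw.
Qed.

Lemma phinS n : phin p n.+1 = phiw p (phin p n).
Proof. exact: iterS. Qed.

Lemma phi_L : phi p L = L :: rcons (nseq p.-1 L) S.
Proof. by case: p p_gt1. Qed.

Lemma phin_head n : exists t, phin p n = L :: t.
Proof.
elim: n => [|n [t IHn]]; first by exists [::].
by rewrite phinS IHn phiw_cons phi_L; eexists.
Qed.

(* The fictitious letter L in front of phi_p^n(L) is harmless since both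
   L L and S L are admissible. *)
Lemma path_phin n : path admissible L (phin p n).
Proof.
elim: n => [|n IHn] //.
have [t ht] := phin_head n.+1.
by have := path_phiw _ _ IHn; rewrite -phinS ht.
Qed.

Lemma phin_prefix n : exists t, phin p n.+1 = phin p n ++ t.
Proof.
elim: n => [|n [t IHn]].
  by exists (behead (phi p L)); rewrite phinS phiw_cons phi_L /= cats0.
by exists (phiw p t); rewrite phinS [in LHS]IHn phiw_cat.
Qed.

Lemma phin_prefix_leq n m : n <= m -> exists t, phin p m = phin p n ++ t.
Proof.
apply: (homo_leq (r := fun s t => exists r, t = s ++ r) (f := phin p)).
- by move=> s; exists [::]; rewrite cats0.
- by move=> _ s _ [r ->] [r' ->]; exists (r ++ r'); rewrite catA.
- exact: phin_prefix.
Qed.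

Lemma size_phiw w : size w <= size (phiw p w).
Proof.
elim: w => [|y w IHw] //; rewrite phiw_cons size_cat /= -add1n leq_add //.
by case: y => //=; rewrite size_rcons.
Qed.

Lemma size_phin n : n < size (phin p n).
Proof.
elim: n => [|n IHn] //.
have [t ht] := phin_head n.
have := size_phiw t; rewrite ht /= in IHn.
rewrite phinS ht phiw_cons phi_L size_cat /= size_rcons; lia.
Qed.

Lemma u_nth i N : i < N -> u p i = nth L (phin p N) i.
Proof.
move=> iN; have [t ->] := phin_prefix_leq _ _ iN.
by rewrite /u nth_cat (ltnW (size_phin i.+1)).
Qed.

Lemma u0 : u p 0 = L.
Proof. by have [t ht] := phin_head 1; rewrite /u ht. Qed.

Lemma admissible_u i : admissible (u p i) (u p i.+1).
Proof.
have /(pathP L)/(_ i.+1 (ltnW (size_phin i.+2))) := path_phin i.+2.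
by rewrite (u_nth i i.+2) // (u_nth i.+1 i.+2).
Qed.

End Substitution.

Theorem mainTheorem3 (p : nat) (hp : 1 < p) :
  (forall i, u p i = S ->
     0 < i /\ u p i.-1 = L /\ (u p i.+1 = L \/ u p i.+1 = M)) /\
  (forall i, u p i = M ->
     0 < i /\ u p i.-1 = S /\ u p i.+1 = L).
Proof.
split=> -[|i] ui; try by rewrite (u0 _ hp) in ui.
all: have := admissible_u _ hp i; have := admissible_u _ hp i.+1.
all: by rewrite ui; case: (u p i); case: (u p i.+2); auto.
Qed.
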